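(* For every positive integer $\ell$ there exists a bipartite planar graph $G$ such that for every graph $H$ and every path $P$, if $G$ is isomorphic to a subgraph of $H\boxtimes P\boxtimes K_\ell$, then $K_4$ is a $2$-small minor of $H$, and thus $H$ has treewidth at least $3$.
   Context: Graphs are finite and simple. A model of $F$ in $H$ assigns to each $v\in V(F)$ a connected subgraph $\mu(v)$ of $H$, pairwise vertex-disjoint, with $\mu(v)$ and $\mu(w)$ joined by an edge of $H$ whenever $vw\in E(F)$; $F$ is a $2$-small minor of $H$ if such a model exists with $|V(\mu(v))|\le 2$ for all $v$. The strong product $G\boxtimes H$ has vertex set $V(G)\times V(H)$ with $(v,w)\sim(v',w')$ if ($v=v'$ and $ww'\in E(H)$) or ($w=w'$ and $vv'\in E(G)$) or ($vv'\in E(G)$ and $ww'\in E(H)$). *)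

From Stdlib Require Import Reals.
From mathcomp Require Import all_boot.

Set Implicit Arguments.
Unset Strict Implicit.
Unset Printing Implicit Defensive.

Definition simple_graph (V : finType) (e : rel V) : Prop :=
  symmetric e /\ irreflexive e.

Definition complete (n : nat) : rel 'I_n := fun i j => i != j.
Definition pathg (n : nat) : rel 'I_n :=
  fun i j => (i.+1 == j :> nat) || (j.+1 == i :> nat).

Definition strong (T1 T2 : finType) (e1 : rel T1) (e2 : rel T2) : rel (T1 * T2) :=
  fun x y => [|| (x.1 == y.1) && e2 x.2 y.2,
                 (x.2 == y.2) && e1 x.1 y.1
               | e1 x.1 y.1 && e2 x.2 y.2].

Definition induced (V : finType) (e : rel V) (S : {set V}) : rel V :=
  fun x y => [&& e x y, x \in S & y \in S].

Definition connected_in (V : finType) (e : rel V) (S : {set V}) : Prop :=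
  forall x y, x \in S -> y \in S -> connect (induced e S) x y.

Definition model (VF VH : finType) (eF : rel VF) (eH : rel VH)
  (mu : VF -> {set VH}) : Prop :=
  [/\ (forall v, mu v != set0),
      (forall v, connected_in eH (mu v)),
      (forall v w, v != w -> [disjoint mu v & mu w]) &
      (forall v w, eF v w -> exists x y, [/\ x \in mu v, y \in mu w & eH x y])].

Definition small_minor (k : nat) (VF VH : finType) (eF : rel VF) (eH : rel VH) : Prop :=
  exists mu : VF -> {set VH}, model eF eH mu /\ forall v, #|mu v| <= k.

Definition bipartite (V : finType) (e : rel V) : Prop :=
  exists c : V -> bool, forall x y, e x y -> c x != c y.

(* Arcs are given by maps R -> R*R
   continuous everywhere (only their restriction to [0,1] matters). *)
Definition plane_embedding (V : finType) (e : rel V)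
  (pos : V -> R * R) (g : V -> V -> R -> R * R) : Prop :=
  [/\ injective pos,
      (forall u v, e u v ->
        [/\ (forall t, continuity_pt (fun s => fst (g u v s)) t),
            (forall t, continuity_pt (fun s => snd (g u v s)) t),
            g u v R0 = pos u /\ g u v R1 = pos v,
            (forall s t, (Rle R0 s /\ Rle s R1) -> (Rle R0 t /\ Rle t R1) ->
                g u v s = g u v t -> s = t) &
            (forall w s, (Rlt R0 s /\ Rlt s R1) -> g u v s <> pos w)]) &
      (forall u v u' v', e u v -> e u' v' ->
        ~~ (((u == u') && (v == v')) || ((u == v') && (v == u'))) ->
        forall s t, (Rlt R0 s /\ Rlt s R1) -> (Rle R0 t /\ Rle t R1) -> g u v s <> g u' v' t)].

Definition planar (V : finType) (e : rel V) : Prop :=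
  exists pos g, plane_embedding e pos g.

Definition is_tree (T : finType) (eT : rel T) : Prop :=
  [/\ simple_graph eT, 0 < #|T|, (forall x y, connect eT x y) &
      (forall c : seq T, 3 <= size c -> uniq c -> ~~ cycle eT c)].

Definition tree_decomposition (V : finType) (e : rel V)
  (T : finType) (eT : rel T) (B : T -> {set V}) : Prop :=
  [/\ is_tree eT,
      (forall v, exists t, v \in B t),
      (forall x y, e x y -> exists t, (x \in B t) && (y \in B t)) &
      (forall v, connected_in eT [set t | v \in B t])].

(* treewidth e >= k : every tree decomposition has width >= k,
   i.e. some bag of size >= k+1. *)
Definition treewidth_ge (k : nat) (V : finType) (e : rel V) : Prop :=
  forall (T : finType) (eT : rel T) (B : T -> {set V}),
    tree_decomposition e eT B -> exists t, k < #|B t|.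

(* G consists of a path L_0 ... L_T (the spine), a hub X adjacent to every
   even L_p, and apexes Y_j, each adjacent to the even vertices of the j-th
   block of the spine.  Putting X below, the Y_j above and the spine on a
   horizontal line gives a straight-line plane drawing, and parity of the
   spine index gives a 2-colouring.
   Every vertex of G is within distance 2 of X, so in an embedding into
   H x P x K_l all path coordinates lie within 2 of that of X: at most 5l
   vertices of G share their image in H.  Counting with this bound gives an
   apex Y_j whose image B differs from the image A of X, a run
   z_0 w_0 z_1 ... z_K of block j whose images avoid A and B, two consecutive
   even vertices z_k, z_(k+1) with distinct images s, s', and an even vertex
   of block j whose image t avoids A, B, s, s' and the image c of w_k.  Then
   A and B are adjacent to s, s', t, and c links s to s': the branch sets
   {s}, {A}, {B, t}, {c, s'} form a K_4.  In any tree decomposition the bags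
   meeting a branch set form a subtree, these four subtrees pairwise meet,
   and by the Helly property of subtrees one bag meets all four. *)

From Stdlib Require Import Reals Lra.
From mathcomp Require Import all_boot zify.

Set Implicit Arguments.
Unset Strict Implicit.
Unset Printing Implicit Defensive.

Section InducedConnectivity.
Variables (T : finType) (e : rel T).
Implicit Types (S A : {set T}) (x y : T).

Lemma connect_induced_sub S S' x y :
  S \subset S' -> connect (induced e S) x y -> connect (induced e S') x y.
Proof.
move=> sSS'; apply: connect_sub => a b /and3P[eab aS bS].
by apply: connect1; rewrite /induced eab !(subsetP sSS').
Qed.

Lemma connect_induced_mem S x y :
  connect (induced e S) x y -> x \in S -> y \in S.
Proof.
case/connectP=> p; elim: p x => [|z p IH] x /=; first by move=> _ ->.
by case/andP=> /and3P[_ _ zS] pz yl _; exact: IH pz yl zS.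
Qed.

Lemma connect_induced_cross S A x y :
  connect (induced e S) x y -> x \notin A -> y \in A ->
  exists v u, [/\ e v u, v \in S :\: A, u \in S :&: A &
                  connect (induced e (S :\: A)) x v].
Proof.
case/connectP=> p; elim: p x => [|z p IH] x /=; first by move=> _ -> /negPf->.
case/andP=> /and3P[exz xS zS] pz yl xA yA.
have [zA | zA] := boolP (z \in A).
  by exists x, z; rewrite !inE xA xS zS zA connect0.
have [v [u [evu vSA uSA czv]]] := IH z pz yl zA yA.
exists v, u; split=> //; apply: connect_trans czv; apply: connect1.
by rewrite /induced exz !inE xA zA xS zS.
Qed.

Lemma connected_set1 x : connected_in e [set x].
Proof. by move=> a b /set1P-> /set1P->. Qed.

Lemma connected_set2 x y :
  symmetric e -> x = y \/ e x y -> connected_in e [set x; y].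
Proof.
move=> e_sym xy a b; rewrite !inE.
have cxy : connect (induced e [set x; y]) x y.
  case: xy => [<- | exy]; first exact: connect0.
  by apply: connect1; rewrite /induced exy !inE !eqxx orbT.
have cyx : connect (induced e [set x; y]) y x.
  case: xy => [-> | exy]; first exact: connect0.
  by apply: connect1; rewrite /induced e_sym exy !inE !eqxx orbT.
by case/orP=> /eqP-> /orP[]/eqP->.
Qed.

End InducedConnectivity.

Section Forest.
Variables (T : finType) (eT : rel T).
Hypotheses (eT_sym : symmetric eT) (eT_irr : irreflexive eT).
Hypothesis eT_acyclic : forall c : seq T, 3 <= size c -> uniq c -> ~~ cycle eT c.
Implicit Types (S A : {set T}) (x y u v : T).

Definition del_edge u v : rel T :=
  fun x y => eT x y && ([set x; y] != [set u; v]).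

Lemma del_edge_sym u v : symmetric (del_edge u v).
Proof. by move=> x y; rewrite /del_edge eT_sym setUC. Qed.

Lemma forest_edge_cut u v : eT u v -> ~~ connect (del_edge u v) u v.
Proof.
move=> euv; apply/negP=> /connectP[p p_path]; case: (shortenP p_path).
move=> q q_path q_uniq _ q_last {p p_path}.
have q_eT : path eT u q by apply: sub_path q_path => x y /andP[].
case: q q_path q_uniq q_last q_eT => [|z [|z' q]].
- by move=> _ _ /= vu; move: euv; rewrite -vu eT_irr.
- by move=> /= /andP[/andP[_]] + _ _ zv; rewrite zv eqxx.
- move=> _ q_uniq q_last q_eT; have := @eT_acyclic [:: u, z, z' & q] isT q_uniq.
  by rewrite /cycle rcons_path q_eT -q_last eT_sym euv.
Qed.

Lemma connect_del_edge S u v x y :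
  connect (induced eT S) x y -> (u \notin S) || (v \notin S) ->
  connect (del_edge u v) x y.
Proof.
move=> + uvS; apply: connect_sub => a b /and3P[eab aS bS]; apply: connect1.
rewrite /del_edge eab; apply: contraTneq uvS => abuv.
have sub : [set u; v] \subset S by rewrite -abuv subUset !sub1set aS bS.
by rewrite !(subsetP sub) // !inE eqxx ?orbT.
Qed.

Lemma connected_setI S S' :
  connected_in eT S -> connected_in eT S' -> connected_in eT (S :&: S').
Proof.
(* A path in S from y enters the component C of x in S :&: S' through an edge
   v u with v \notin S'; the walk u ~ x ~ y ~ v inside C, S', S :\: C avoids
   that edge. *)
move=> cS cS' x y xI yI; apply/negPn/negP => nxy.
pose C := [set z | connect (induced eT (S :&: S')) x z].
have xC : x \in C by rewrite inE connect0.
have yC : y \notin C by rewrite inE.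
move: (xI) (yI); rewrite !inE => /andP[xS xS'] /andP[yS yS'].
have [v [u [evu vSC uSC cyv]]] := connect_induced_cross (cS y x yS xS) yC xC.
move: vSC uSC; rewrite !inE => /andP[vC vS] /andP[uS cxu].
have uS' : u \in S' by have := connect_induced_mem cxu xI; rewrite inE => /andP[].
have vS' : v \notin S'.
  apply: contra vC => vS'; apply: connect_trans cxu (connect1 _).
  by rewrite /induced eT_sym evu !inE uS uS' vS vS'.
apply: (negP (forest_edge_cut evu)).
apply: (@connect_trans _ _ y).
  rewrite (sym_connect_sym (@del_edge_sym _ _)).
  by apply: (connect_del_edge cyv); rewrite !inE cxu orbT.
apply: (@connect_trans _ _ x).
  by apply: (connect_del_edge (cS' y x yS' xS')); rewrite vS'.
by apply: (connect_del_edge cxu); rewrite !inE (negPf vS') andbF.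
Qed.

Lemma subtrees_meet3 S1 S2 S3 a b c :
  connected_in eT S1 -> connected_in eT S2 -> connected_in eT S3 ->
  a \in S2 :&: S3 -> b \in S1 :&: S3 -> c \in S1 :&: S2 ->
  S1 :&: S2 :&: S3 != set0.
Proof.
(* The path from b to a inside S3 enters S2 through an edge v u, and u \notin S1;
   the walk u ~ c ~ b ~ v inside S2, S1, S3 :\: S2 avoids that edge. *)
move=> cS1 cS2 cS3; rewrite !inE => /andP[aS2 aS3] /andP[bS1 bS3] /andP[cS1' cS2'].
apply/negP=> /eqP none.
have notall t : t \in S1 -> t \in S2 -> t \in S3 -> False.
  by move=> t1 t2 t3; move: (in_set0 t); rewrite -none !inE t1 t2 t3.
have bS2 : b \notin S2 by apply/negP=> bS2; exact: notall b bS1 bS2 bS3.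
have [v [u [evu vS uS cbv]]] := connect_induced_cross (cS3 b a bS3 aS3) bS2 aS2.
move: vS uS; rewrite !inE => /andP[vS2 vS3] /andP[uS3 uS2].
have uS1 : u \notin S1 by apply/negP=> uS1; exact: notall u uS1 uS2 uS3.
apply: (negP (forest_edge_cut evu)).
apply: (@connect_trans _ _ b).
  rewrite (sym_connect_sym (@del_edge_sym _ _)).
  by apply: (connect_del_edge cbv); rewrite !inE uS2 /= orbT.
apply: (@connect_trans _ _ c).
  by apply: (connect_del_edge (cS1 b c bS1 cS1')); rewrite uS1 orbT.
by apply: (connect_del_edge (cS2 c u cS2' uS2)); rewrite vS2.
Qed.

Lemma subtrees_helly (s : seq {set T}) : s != [::] ->
  {in s, forall X, connected_in eT X} -> {in s &, forall X Y, X :&: Y != set0} ->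
  exists t : T, {in s, forall X : {set T}, t \in X}.
Proof.
have [n] := ubnP (size s); elim: n s => // n IH [//|A s] /= /ltnSE s_n _ conn meet.
have [-> | s_ne] := eqVneq s [::].
  have /set0Pn[t] := meet A A (mem_head _ _) (mem_head _ _).
  by rewrite setIid => tA; exists t => X; rewrite inE => /eqP->.
have As X : X \in s -> X \in A :: s by move=> Xs; rewrite inE Xs orbT.
have [t tAs] :
    exists t : T, {in [seq A :&: X | X <- s], forall X : {set T}, t \in X}.
  apply: IH.
  - by rewrite size_map.
  - by rewrite -size_eq0 size_map size_eq0.
  - move=> _ /mapP[X Xs ->]; apply: connected_setI; apply: conn.
      exact: mem_head.
    exact: As.
  - move=> _ _ /mapP[X Xs ->] /mapP[Y Ys ->].
    have /set0Pn[a aYA] := meet Y A (As _ Ys) (mem_head _ _).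
    have /set0Pn[b bXA] := meet X A (As _ Xs) (mem_head _ _).
    have /set0Pn[c cXY] := meet X Y (As _ Xs) (As _ Ys).
    rewrite setIACA setIid setIC.
    by apply: (subtrees_meet3 _ _ _ aYA bXA cXY); apply: conn;
      rewrite ?mem_head ?As.
have [X0 X0s] : exists X, X \in s.
  by case: (s) s_ne => // X s' _; exists X; exact: mem_head.
have tA : t \in A by have := tAs _ (map_f _ X0s); rewrite inE => /andP[].
exists t => X; rewrite inE => /orP[/eqP-> // | Xs].
by have := tAs _ (map_f _ Xs); rewrite inE => /andP[].
Qed.

End Forest.

Section TreeDecompositions.
Variables (V : finType) (e : rel V) (T : finType) (eT : rel T) (B : T -> {set V}).
Hypothesis td : tree_decomposition e eT B.

Lemma bags_meeting_connected (X : {set V}) :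
  connected_in e X -> connected_in eT [set t | X :&: B t != set0].
Proof.
case: td => _ _ bag_edge bag_conn cX.
set TX := [set t | _].
have bagsX x : x \in X -> [set t | x \in B t] \subset TX.
  move=> xX; apply/subsetP => t; rewrite !inE => xt.
  by apply/set0Pn; exists x; rewrite inE xX.
have reach x t t' : x \in X -> x \in B t -> x \in B t' -> connect (induced eT TX) t t'.
  move=> xX xt xt'; apply: connect_induced_sub (bagsX x xX) _.
  by apply: bag_conn; rewrite inE.
move=> t1 t2; rewrite !inE => /set0Pn[x1 /setIP[x1X x1t1]] /set0Pn[x2 /setIP[x2X x2t2]].
case/connectP: (cX x1 x2 x1X x2X) => p.
elim: p x1 t1 x1X x1t1 => [|y p IH] x1 t1 x1X x1t1 /=.
  by move=> _ x21; apply: (reach x1) => //; rewrite -x21.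
case/andP=> /and3P[exy _ yX] py lp.
have [t /andP[x1t yt]] := bag_edge x1 y exy.
exact: connect_trans (reach x1 t1 t x1X x1t1 x1t) (IH y t yX yt py lp).
Qed.

End TreeDecompositions.

Lemma complete_minor_treewidth_ge (V : finType) (e : rel V) k n :
  small_minor k (@complete n.+1) e -> treewidth_ge n e.
Proof.
case=> mu [[mu_ne mu_conn mu_disj mu_adj] _] T eT B td.
have [[[eT_sym eT_irr] _ _ eT_acyclic] bag_cover bag_edge _] := td.
pose meets i := [set t | mu i :&: B t != set0].
have [t t_meets] :
    exists t, {in map meets (enum 'I_n.+1), forall X : {set T}, t \in X}.
  apply: (subtrees_helly eT_sym eT_irr eT_acyclic).
  - by rewrite -size_eq0 size_map size_enum_ord.
  - by move=> _ /mapP[i _ ->]; exact: (bags_meeting_connected td (mu_conn i)).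
  move=> _ _ /mapP[i _ ->] /mapP[j _ ->]; apply/set0Pn.
  have [<- | ij] := eqVneq i j.
    have /set0Pn[x xi] := mu_ne i; have [t xt] := bag_cover x.
    by exists t; rewrite setIid inE; apply/set0Pn; exists x; rewrite inE xi.
  have [x [y [xi yj exy]]] := mu_adj i j ij.
  have [t /andP[xt yt]] := bag_edge x y exy.
  by exists t; rewrite !inE; apply/andP; split; apply/set0Pn;
    [exists x | exists y]; rewrite inE ?xi ?yj.
have /fin_all_exists[g gP] i : exists x, x \in mu i :&: B t.
  by apply/set0Pn; have := t_meets _ (map_f meets (mem_enum _ i)); rewrite inE.
have g_inj : injective g.
  move=> i j gij; apply/eqP; apply: contraT => ij.
  have := gP i; have := gP j; rewrite !inE gij => /andP[gj _] /andP[gi _].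
  by rewrite (disjointFr (mu_disj _ _ ij) gi) in gj.
exists t; rewrite -[n.+1]card_ord -(card_imset _ g_inj).
by apply: subset_leq_card; apply/subsetP => _ /imsetP[i _ ->]; case/setIP: (gP i).
Qed.

Section SmallMinors.
Variables (V : finType) (e : rel V).
Hypothesis e_simple : simple_graph e.

Lemma complete_small_minor k n (mu : 'I_n -> {set V}) :
  (forall i, [/\ mu i != set0, connected_in e (mu i) & #|mu i| <= k]) ->
  (forall i j : 'I_n, i < j ->
     [disjoint mu i & mu j] /\ exists x y, [/\ x \in mu i, y \in mu j & e x y]) ->
  small_minor k (@complete n) e.
Proof.
have [e_sym _] := e_simple.
move=> mu_ok mu_pair; exists mu; split; last by move=> i; case: (mu_ok i).
split=> [i | i | i j | i j];
  first [by case: (mu_ok i) | rewrite /complete -val_eqE neq_ltn].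
  by case/orP=> /mu_pair[] //; rewrite disjoint_sym.
case/orP=> /mu_pair[_ [x [y [xi yj exy]]]]; first by exists x, y.
by exists y, x; rewrite e_sym.
Qed.

Lemma K23_path_small_minor (A B s s' c t : V) :
  A != B -> s != s' -> {in [:: s; s'; c], forall x, x \notin [:: A; B]} ->
  t \notin [:: A; B; s; s'; c] -> {in [:: s; s'; t], forall x, e A x && e B x} ->
  c = s \/ e s c -> c = s' \/ e c s' ->
  small_minor 2 (@complete 4) e.
Proof.
have [e_sym e_irr] := e_simple.
move=> AB ss' off_AB t_new poles.
have off x : x \in [:: s; s'; c] -> x != A /\ x != B.
  by move/off_AB; rewrite !inE => /norP.
have [sA sB] : s != A /\ s != B by apply: off; rewrite !inE eqxx.
have [s'A s'B] : s' != A /\ s' != B by apply: off; rewrite !inE eqxx orbT.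
have [cA cB] : c != A /\ c != B by apply: off; rewrite !inE eqxx !orbT.
move: t_new; rewrite !inE => /norP[tA /norP[tB /norP[ts /norP[ts' tc]]]].
have pole x : x \in [:: s; s'; t] -> e A x /\ e B x by move/poles/andP.
have [eAs eBs] : e A s /\ e B s by apply: pole; rewrite !inE eqxx.
have [eAs' eBs'] : e A s' /\ e B s' by apply: pole; rewrite !inE eqxx orbT.
have [eAt eBt] : e A t /\ e B t by apply: pole; rewrite !inE eqxx !orbT.
clear off_AB poles off pole.
(* If c = s then s s' is an edge, and c := s' does the job. *)
wlog esc : c cA cB tc / e s c.
  move=> wlog_esc [cs | esc] cs'; last by apply: (wlog_esc c) => //; right.
  have ess' : e s s'.
    by case: cs' => [s's | ]; [move: ss'; rewrite -cs s's eqxx | rewrite -cs].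
  by apply: (wlog_esc s') => //; [right | left].
move=> _ cs'.
have cs : c != s by apply: contraTneq esc => ->; rewrite e_irr.
pose mu (i : 'I_4) := nth set0 [:: [set s]; [set A]; [set B; t]; [set c; s']] i.
apply: (complete_small_minor (mu := mu)).
  case=> [[|[|[|[|//]]]] ?];
    rewrite /mu /= -card_gt0 ?cards1 ?cards2 ?ltnS ?leq_b1; split=> //.
  - exact: connected_set1.
  - exact: connected_set1.
  - by apply: connected_set2 => //; right.
  - exact: connected_set2.
case=> [[|[|[|[|//]]]] ?] [[|[|[|[|//]]]] ?] //= _; rewrite /mu /=; split.
- by rewrite disjoints1 inE.
- by exists s, A; rewrite !inE !eqxx e_sym.
- by rewrite disjoints1 !inE negb_or sB eq_sym.
- by exists s, B; rewrite !inE !eqxx e_sym.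
- by rewrite disjoints1 !inE negb_or eq_sym cs.
- by exists s, c; rewrite !inE !eqxx.
- by rewrite disjoints1 !inE negb_or AB eq_sym.
- by exists A, t; rewrite !inE !eqxx orbT.
- by rewrite disjoints1 !inE negb_or ![A == _]eq_sym cA s'A.
- by exists A, s'; rewrite !inE !eqxx orbT.
- rewrite disjoints_subset subUset !sub1set !inE !negb_or ![B == _]eq_sym cB s'B.
  by rewrite tc ts'.
- by exists B, s'; rewrite !inE !eqxx orbT.
Qed.

End SmallMinors.

Lemma mul_add_lt a b m n : a < m -> b < n -> a * n + b < m * n.
Proof. by move=> am bn; nia. Qed.

Lemma card_set_seq_le (T : finType) (ws : seq T) : #|[set x in ws]| <= size ws.
Proof. by rewrite cardsE card_size. Qed.

Section Construction.
Variable l : nat.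

(* With K := fibre_bound, a unit holds K + 1 even positions, a block has
   2K + 1 units (more than the at most 2K vertices mapped to A or B), and
   there are K + 1 apexes (more than a single fibre). *)
Definition fibre_bound := 5 * l.
Definition nblocks := fibre_bound.+1.
Definition unit_len := fibre_bound.+1.*2.
Definition nunits := fibre_bound.*2.+1.
Definition block_len := nunits * unit_len.
Definition spine_len := nblocks * block_len.

Definition gvertex : finType := (option 'I_nblocks + 'I_spine_len.+1)%type.

Definition hub : gvertex := inl None.
Definition apex j : gvertex := inl (Some j).
Definition spine r : gvertex := inr (inord r).

Definition gadj : rel gvertex := fun a b =>
  match a, b with
  | inl None, inr p | inr p, inl None => ~~ odd p
  | inl (Some j), inr p | inr p, inl (Some j) => ~~ odd p && (p %/ block_len == j)
  | inr p, inr q => (p.+1 == q) || (q.+1 == p)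
  | _, _ => false
  end.

Lemma gadj_simple : simple_graph gadj.
Proof.
split; first by move=> [[j|]|p] [[j'|]|q] //=; rewrite orbC.
by move=> [[j|]|p] //=; apply/negP => /orP[] /eqP; lia.
Qed.

Lemma gadj_bipartite : bipartite gadj.
Proof.
exists (fun v : gvertex => if v is inr p then ~~ odd p else false).
move=> [[j|]|p] [[j'|]|q] //=; try by [case/andP=> -> | move=> ->].
by case/orP=> /eqP <- /=; case: (odd _).
Qed.

Lemma block_len_gt0 : 0 < block_len.
Proof. by rewrite muln_gt0. Qed.

Lemma odd_unit_len : odd unit_len = false.
Proof. exact: odd_double. Qed.

Lemma odd_block_len : odd block_len = false.
Proof. by rewrite oddM odd_unit_len andbF. Qed.

Lemma block_pos_lt (j : 'I_nblocks) r : r < block_len -> j * block_len + r < spine_len.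
Proof. exact: mul_add_lt. Qed.

Lemma unit_pos_lt u r : u < nunits -> r < unit_len -> u * unit_len + r < block_len.
Proof. exact: mul_add_lt. Qed.

Lemma spine_inj r r' :
  r <= spine_len -> r' <= spine_len -> spine r = spine r' -> r = r'.
Proof. by move=> r_le r'_le [] /(congr1 val) /=; rewrite !inordK. Qed.

Lemma hub_spine r : r <= spine_len -> ~~ odd r -> gadj hub (spine r).
Proof. by move=> r_le /=; rewrite inordK. Qed.

Lemma spine_succ r : r < spine_len -> gadj (spine r) (spine r.+1).
Proof. by move=> r_lt /=; rewrite !inordK ?eqxx // ltnW. Qed.

Definition block_vertex (j : 'I_nblocks) r := spine (j * block_len + r).

Lemma block_vertex_inj j r r' :
  r < block_len -> r' < block_len -> block_vertex j r = block_vertex j r' -> r = r'.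
Proof.
move=> r_lt r'_lt /spine_inj.
by move=> /(_ (ltnW (block_pos_lt j r_lt)) (ltnW (block_pos_lt j r'_lt)))/addnI.
Qed.

Lemma hub_block_vertex j r : r < block_len -> ~~ odd r -> gadj hub (block_vertex j r).
Proof.
move=> r_lt r_even; apply: hub_spine; first exact/ltnW/block_pos_lt.
by rewrite oddD oddM odd_block_len andbF.
Qed.

Lemma apex_block_vertex j r :
  r < block_len -> ~~ odd r -> gadj (apex j) (block_vertex j r).
Proof.
move=> r_lt r_even /=; rewrite inordK; last exact/ltnW/block_pos_lt.
rewrite oddD oddM odd_block_len andbF r_even /=.
by rewrite divnMDl ?block_len_gt0 // divn_small // addn0.
Qed.

Lemma block_vertex_succ j r : r.+1 < block_len ->
  gadj (block_vertex j r) (block_vertex j r.+1).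
Proof.
by move=> r_lt; rewrite /block_vertex addnS; apply/spine_succ/block_pos_lt/ltnW.
Qed.

Lemma near_hub v :
  v = hub \/ gadj hub v \/ exists y, gadj hub y && gadj y v.
Proof.
have [gadj_sym _] := gadj_simple.
case: v => [[j|]|p]; [right; right | by left | right].
  exists (block_vertex j 0).
  by rewrite hub_block_vertex ?block_len_gt0 // gadj_sym apex_block_vertex ?block_len_gt0.
have [p_odd | p_even] := boolP (odd p); last by left.
have p_gt0 : 0 < p by case: (nat_of_ord p) p_odd.
right; exists (spine p.-1); apply/andP; split.
  by apply: hub_spine; rewrite ?odd_pred ?p_odd //; have := ltn_ord p; lia.
have -> : inr p = spine p.-1.+1 by rewrite prednK // /spine inord_val.
by apply: spine_succ; have := ltn_ord p; lia.
Qed.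

End Construction.

Section Drawing.
Variable l : nat.
Local Notation Q := (block_len l).
Local Open Scope R_scope.

Lemma INR_add_frac_inj (p q : nat) (s t : R) :
  0 < s < 1 -> 0 <= t <= 1 -> INR p + s = INR q + t -> p = q.
Proof.
move=> s01 t01 pq; case: (ltngtP p q) => // /leP/le_INR; rewrite S_INR; lra.
Qed.

Lemma INR_add_frac_neq (p q : nat) (s : R) : 0 < s < 1 -> INR p + s <> INR q.
Proof.
move=> s01 pq; have pq' : p = q by apply: (@INR_add_frac_inj _ _ s 0); lra.
by rewrite pq' in pq; lra.
Qed.

Definition vpos (v : gvertex l) : R * R :=
  match v with
  | inl None => (0, 0)
  | inl (Some j) => (INR (j * Q), 2)
  | inr p => (INR p, 1)
  end.

Definition edge_arc (u v : gvertex l) (s : R) : R * R :=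
  ((vpos u).1 + s * ((vpos v).1 - (vpos u).1),
   (vpos u).2 + s * ((vpos v).2 - (vpos u).2)).

Lemma edge_arc_rev u v s : edge_arc v u s = edge_arc u v (1 - s).
Proof. by rewrite /edge_arc; f_equal; ring. Qed.

Definition orient (u v : gvertex l) : gvertex l * gvertex l :=
  match u, v with
  | inr p, inr q => if (p < q)%N then (u, v) else (v, u)
  | inr _, inl _ => (v, u)
  | _, _ => (u, v)
  end.

Lemma orientP u v : orient u v = (u, v) \/ orient u v = (v, u).
Proof. by case: u v => [?|p] [?|q] /=; try case: (p < q)%N; auto. Qed.

Lemma vpos_inj : injective vpos.
Proof.
case=> [[j|]|p] [[j'|]|q] //= /pair_equal_spec[x_eq y_eq]; try lra.
  by move/INR_eq/eqP: x_eq; rewrite eqn_pmul2r ?block_len_gt0 // => /eqP/val_inj->.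
by move/INR_eq/val_inj: x_eq => ->.
Qed.

Lemma apex_arc_x_range (j q : nat) s : (q %/ Q = j)%N -> 0 <= s <= 1 ->
  INR (j * Q) <= INR (j * Q) + s * (INR q - INR (j * Q)) < INR (j * Q + Q).
Proof.
move=> qj s01.
have /leP/le_INR jq : (j * Q <= q)%N by rewrite -qj leq_divM.
have /leP/lt_INR qj' : (q < j * Q + Q)%N by rewrite -mulSnr -qj ltn_ceil ?block_len_gt0.
by split; nra.
Qed.

Lemma block_start_le (j j' : nat) : (j < j')%N -> INR (j * Q + Q) <= INR (j' * Q).
Proof. by move=> jj; apply/le_INR/leP; rewrite -mulSnr leq_mul2r jj orbT. Qed.

Lemma oriented_spine_succ (p q : 'I_(spine_len l).+1) :
  gadj (inr p) (inr q) -> orient (inr p) (inr q) = (inr p, inr q) -> q = p.+1 :> nat.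
Proof.
move=> e; rewrite /=; case: ltnP => [pq _ | _ [qp _]]; move: e.
  by case/orP=> /eqP; lia.
by rewrite qp => /orP[] /eqP; lia.
Qed.

Lemma oriented_arc_inj a b a' b' s t :
  gadj a b -> gadj a' b' -> orient a b = (a, b) -> orient a' b' = (a', b') ->
  0 < s < 1 -> 0 <= t <= 1 -> edge_arc a b s = edge_arc a' b' t -> a = a' /\ b = b'.
Proof.
move: a b a' b' => [[j|]|p] [[k|]|q] // [[j'|]|p'] [[k'|]|q'] //=.
all: move=> e e' o o' s01 t01 /pair_equal_spec[] /= x_eq y_eq; try lra.
- have ? : t = s by lra.
  subst t.
  move: e e' => /andP[_ /eqP qj] /andP[_ /eqP q'j'].
  have s01' : 0 <= s <= 1 by lra.
  have [x_lo x_hi] := apex_arc_x_range qj s01'.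
  have [x'_lo x'_hi] := apex_arc_x_range q'j' s01'.
  have jj' : j = j' :> nat.
    by case: (ltngtP j j') => // /block_start_le; lra.
  rewrite -jj' in x_eq; have qq' : INR q = INR q' by nra.
  by rewrite (val_inj jj') (val_inj (INR_eq _ _ qq')).
- have ? : t = s by lra.
  subst t; have qq' : INR q = INR q' by apply: (Rmult_eq_reg_l s); lra.
  by rewrite (val_inj (INR_eq _ _ qq')).
- have ? : t = 1 by lra.
  subst t; rewrite (oriented_spine_succ e o) S_INR in x_eq.
  by case: (@INR_add_frac_neq p q' s s01); lra.
- have ? : t = 1 by lra.
  subst t; rewrite (oriented_spine_succ e o) S_INR in x_eq.
  by case: (@INR_add_frac_neq p q' s s01); lra.
- rewrite (oriented_spine_succ e o) (oriented_spine_succ e' o') !S_INR in x_eq.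
  have pp' : p = p' :> nat by apply: (@INR_add_frac_inj _ _ s t); lra.
  have qq' : q = q' :> nat.
    by rewrite (oriented_spine_succ e o) (oriented_spine_succ e' o') pp'.
  by split; congr inr; exact: val_inj.
Qed.

Lemma orient_edge u v : gadj u v ->
  gadj (orient u v).1 (orient u v).2 /\
  orient (orient u v).1 (orient u v).2 = orient u v.
Proof.
have [gadj_sym _] := gadj_simple l.
move=> e; case: (orientP u v) => o_eq; rewrite o_eq /=; split; rewrite ?o_eq //.
  by rewrite gadj_sym.
move: o_eq e; case: u v => [[?|]|p] [[?|]|q] //=.
case: ltngtP => [pq [pq_eq _] | // | /val_inj-> //].
by rewrite pq_eq ltnn in pq.
Qed.

Lemma edge_arc_orient u v s : exists2 s',
  (0 < s < 1 -> 0 < s' < 1) /\ (0 <= s <= 1 -> 0 <= s' <= 1) &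
  edge_arc u v s = edge_arc (orient u v).1 (orient u v).2 s'.
Proof.
case: (orientP u v) => ->; first by exists s.
by exists (1 - s); [split; lra | rewrite -edge_arc_rev].
Qed.

Lemma edge_arc_cross u v u' v' s t : gadj u v -> gadj u' v' ->
  0 < s < 1 -> 0 <= t <= 1 -> edge_arc u v s = edge_arc u' v' t ->
  orient u v = orient u' v'.
Proof.
move=> /orient_edge[e o] /orient_edge[e' o'] s01 t01.
have [s' [s'01 _] ->] := edge_arc_orient u v s.
have [t' [_ t'01] ->] := edge_arc_orient u' v' t.
move: e o e' o'; case: (orient u v) => a b; case: (orient u' v') => a' b' /= e o e' o'.
by case/(oriented_arc_inj e e' o o' (s'01 s01) (t'01 t01)) => -> ->.
Qed.

Lemma orient_inj u v u' v' : orient u v = orient u' v' ->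
  (u == u') && (v == v') || (u == v') && (v == u').
Proof.
by case: (orientP u v) (orientP u' v') => -> [] -> [-> ->]; rewrite !eqxx ?orbT.
Qed.

Lemma oriented_arc_avoids a b w s : gadj a b -> orient a b = (a, b) ->
  0 < s < 1 -> edge_arc a b s <> vpos w.
Proof.
move: a b w => [[j|]|p] [[k|]|q] // [[j'|]|r] //=.
all: move=> e o s01 /pair_equal_spec[] /= x_eq y_eq; try lra.
rewrite (oriented_spine_succ e o) S_INR in x_eq.
by case: (@INR_add_frac_neq p r s s01); lra.
Qed.

Lemma edge_arc_avoids u v w s : gadj u v -> 0 < s < 1 -> edge_arc u v s <> vpos w.
Proof.
move=> /orient_edge[e o] s01; have [s' [s'01 _] ->] := edge_arc_orient u v s.
move: e o; case: (orient u v) => a b /= e o.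
exact: oriented_arc_avoids e o (s'01 s01).
Qed.

Lemma edge_arc_inj u v s t : u != v -> edge_arc u v s = edge_arc u v t -> s = t.
Proof.
move=> uv /pair_equal_spec[x_eq y_eq]; case: (Req_dec s t) => // st; exfalso.
have st' : s - t <> 0 by lra.
apply: (negP uv); apply/eqP/vpos_inj.
rewrite [vpos u]surjective_pairing [vpos v]surjective_pairing.
by congr pair; apply: (Rmult_eq_reg_l (s - t)); nra.
Qed.

Lemma gadj_planar : planar (@gadj l).
Proof.
have [_ gadj_irr] := gadj_simple l.
exists vpos, edge_arc; split.
- exact: vpos_inj.
- move=> u v e; split.
  + by move=> t; rewrite /edge_arc /=; reg.
  + by move=> t; rewrite /edge_arc /=; reg.
  + rewrite /edge_arc; case: (vpos u) => ? ?; case: (vpos v) => ? ? /=.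
    by split; congr pair; ring.
  + move=> s t _ _; apply: edge_arc_inj.
    by apply: contraTneq e => ->; rewrite gadj_irr.
  + by move=> w s s01; apply: edge_arc_avoids.
move=> u v u' v' e e' not_same s t s01 t01 arc_eq.
by move/negP: not_same; apply; apply/orient_inj/(edge_arc_cross e e' s01 t01 arc_eq).
Qed.
End Drawing.

Lemma strong_proj (T1 T2 : finType) (e1 : rel T1) (e2 : rel T2) x y :
  strong e1 e2 x y -> (x.1 = y.1 \/ e1 x.1 y.1) /\ (x.2 = y.2 \/ e2 x.2 y.2).
Proof.
by case/or3P=> /andP[] => [/eqP-> | /eqP-> | ] ?; split; (by left) || by right.
Qed.

Lemma pathg_near m (i j : 'I_m) : i = j \/ pathg i j -> i <= j + 1 /\ j <= i + 1.
Proof. by case=> [-> | /orP[] /eqP]; lia. Qed.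

Section Minor.
Variable l : nat.
Variables (VH : finType) (eH : rel VH).
Hypothesis eH_simple : simple_graph eH.
Variables (n : nat) (f : gvertex l -> (VH * 'I_n.+1) * 'I_l).
Hypothesis f_inj : injective f.
Hypothesis f_hom : forall x y, gadj x y ->
  strong (strong eH (@pathg n.+1)) (@complete l) (f x) (f y).

Let hv v := (f v).1.1.
Let pv v : nat := (f v).1.2.
Let kv v := (f v).2.
Let K := fibre_bound l.
Let Q := block_len l.
Let P := unit_len l.

Lemma image_edge x y : gadj x y ->
  (hv x = hv y \/ eH (hv x) (hv y)) /\ pv x <= pv y + 1 /\ pv y <= pv x + 1.
Proof.
move/f_hom/strong_proj=> [[fxy | /strong_proj[hxy pxy]] _].
  by rewrite /hv /pv fxy; split; [left | rewrite addn1 leqnSn].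
by split=> //; exact: pathg_near.
Qed.

Lemma image_adj x y : gadj x y -> hv x != hv y -> eH (hv x) (hv y).
Proof. by case/image_edge=> [[-> | //] _]; rewrite eqxx. Qed.

Lemma path_coord_near_hub v : pv v <= pv (hub l) + 2 /\ pv (hub l) <= pv v + 2.
Proof.
case: (near_hub v) => [-> | [/image_edge[_] |
  [y /andP[/image_edge[_ ?] /image_edge[_ ?]]]]]; lia.
Qed.

Lemma card_preimage_le (W : {set VH}) (S : {set gvertex l}) :
  {in S, forall v, hv v \in W} -> #|S| <= #|W| * K.
Proof.
move=> SW.
pose code v : VH * 'I_5 * 'I_l := (hv v, inord (pv v + 2 - pv (hub l)), kv v).
have offset_lt v : pv v + 2 - pv (hub l) < 5 by have := path_coord_near_hub v; lia.
have code_inj : injective code.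
  move=> v w [hvw /(congr1 val)] /=; rewrite !inordK ?offset_lt // => pvw kvw.
  apply: f_inj.
  have := path_coord_near_hub v; have := path_coord_near_hub w.
  move: hvw pvw kvw; rewrite /hv /pv /kv.
  case: (f v) => [[a i] k]; case: (f w) => [[a' i'] k'] /= -> pvw -> ? ?.
  by congr (_, _, _); apply: val_inj => /=; lia.
rewrite -(card_imset _ code_inj) /K /fibre_bound mulnA.
have -> : #|W| * 5 * l = #|setX (setX W [set: 'I_5]) [set: 'I_l]|.
  by rewrite !cardsX !cardsT !card_ord.
by apply: subset_leq_card; apply/subsetP => _ /imsetP[v vS ->]; rewrite !inE SW.
Qed.

Lemma exists_apex_apart : exists j, hv (apex j) != hv (hub l).
Proof.
case: (pickP (fun j => hv (apex j) != hv (hub l))) => [j | same]; first by exists j.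
have := @card_preimage_le [set hv (hub l)] [set apex j | j in 'I_(nblocks l)].
rewrite cards1 mul1n card_imset => [|j j' [] //]; rewrite card_ord ltnn => le.
suff: false by []; apply: le => _ /imsetP[j _ ->].
by rewrite inE; apply/negbFE; exact: same.
Qed.

Lemma exists_clean_unit j (ws : seq VH) : size ws <= 2 ->
  exists2 u, u < nunits l & forall r, r < P -> hv (block_vertex j (u * P + r)) \notin ws.
Proof.
move=> ws_le.
case: (pickP (fun u : 'I_(nunits l) =>
    [forall r : 'I_P, hv (block_vertex j (u * P + r)) \notin ws]))
  => [u /forallP clean | dirty].
  by exists u => // r r_lt; exact: (clean (Ordinal r_lt)).
have /fin_all_exists[g g_ws] (u : 'I_(nunits l)) :
    exists r : 'I_P, hv (block_vertex j (u * P + r)) \in ws.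
  by move/negbT: (dirty u); rewrite negb_forall => /existsP[r]; rewrite negbK; exists r.
pose S := [set block_vertex j (u * P + g u) | u : 'I_(nunits l)].
have S_ws : {in S, forall v, hv v \in [set x in ws]}.
  by move=> _ /imsetP[u _ ->]; rewrite inE.
have := card_preimage_le S_ws.
rewrite card_imset ?card_ord => [le | u u' /block_vertex_inj].
  have := leq_trans le (leq_mul (leq_trans (card_set_seq_le ws) ws_le) (leqnn K)).
  by rewrite /nunits /K; lia.
rewrite !unit_pos_lt // => /(_ isT isT)/(congr1 (divn^~ P)).
by rewrite !divnMDl ?divn_small // ?addn0 => /val_inj.
Qed.

Lemma exists_image_change j u : u < nunits l -> exists2 k, k < K &
  hv (block_vertex j (u * P + k.*2)) != hv (block_vertex j (u * P + k.+1.*2)).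
Proof.
move=> u_lt; pose z k := block_vertex j (u * P + k.*2).
case: (pickP (fun k : 'I_K => hv (z k) != hv (z k.+1))) => [k | same]; first by exists k.
have z_same k : k <= K -> hv (z k) = hv (z 0).
  elim: k => // k IH k_lt; rewrite -IH ?(ltnW k_lt) //.
  by apply/esym/eqP/negbFE; exact: (same (Ordinal k_lt)).
pose S := [set z k | k : 'I_K.+1].
have S_W : {in S, forall v, hv v \in [set hv (z 0)]}.
  by move=> _ /imsetP[k _ ->]; rewrite inE z_same // -ltnS.
have := card_preimage_le S_W.
rewrite cards1 mul1n card_imset ?card_ord ?ltnn // => k k'.
have pos_lt (i : 'I_K.+1) : i.*2 < P by rewrite /P /unit_len ltn_double.
move/block_vertex_inj; rewrite !unit_pos_lt // => /(_ isT isT)/addnI/double_inj.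
exact: val_inj.
Qed.

Lemma exists_third_neighbour j (ws : seq VH) : size ws <= 5 ->
  exists2 r, r < nunits l * K.+1 & hv (block_vertex j r.*2) \notin ws.
Proof.
move=> ws_le.
case: (pickP (fun r : 'I_(nunits l * K.+1) => hv (block_vertex j r.*2) \notin ws))
  => [r | crowded]; first by exists r.
pose S := [set block_vertex j r.*2 | r : 'I_(nunits l * K.+1)].
have S_ws : {in S, forall v, hv v \in [set x in ws]}.
  by move=> _ /imsetP[r _ ->]; rewrite inE; apply/negbFE; exact: crowded.
have Q_eq : block_len l = (nunits l * K.+1).*2 by rewrite /block_len /unit_len doubleMr.
have := card_preimage_le S_ws; rewrite card_imset ?card_ord => [le | r r'].
  have := leq_trans le (leq_mul (leq_trans (card_set_seq_le ws) ws_le) (leqnn K)).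
  by rewrite /nunits; nia.
move/block_vertex_inj; rewrite Q_eq !ltn_double !ltn_ord => /(_ isT isT)/double_inj.
exact: val_inj.
Qed.

Lemma embedding_small_minor_K4 : small_minor 2 (@complete 4) eH.
Proof.
have [j hub_apart] := exists_apex_apart.
set A := hv (hub l); set B := hv (apex j).
have [u u_lt clean] := exists_clean_unit j (ws := [:: A; B]) isT.
pose z i := block_vertex j (u * P + i.*2).
pose w i := block_vertex j (u * P + i.*2.+1).
have [k k_lt change] := exists_image_change j u_lt.
set s := hv (z k); set s' := hv (z k.+1); set c := hv (w k).
have [r r_lt t_new] := exists_third_neighbour j (ws := [:: A; B; s; s'; c]) isT.
set t := hv (block_vertex j r.*2).
have z_lt i : i <= K -> u * P + i.*2 < Q.
  by move=> ?; apply: unit_pos_lt; rewrite // ltn_double.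
have z_even i : ~~ odd (u * P + i.*2) by rewrite oddD oddM odd_unit_len andbF odd_double.
have t_lt : r.*2 < Q by rewrite /Q /block_len /unit_len -doubleMr ltn_double.
have t_out : t \notin [:: A; B] by move: t_new; rewrite !inE !negb_or => /and5P[-> ->].
have pole p : p < Q -> ~~ odd p -> hv (block_vertex j p) \notin [:: A; B] ->
    eH A (hv (block_vertex j p)) && eH B (hv (block_vertex j p)).
  move=> p_lt p_even; rewrite !inE => /norP[pA pB].
  by rewrite !image_adj ?hub_block_vertex ?apex_block_vertex // eq_sym.
have [kK k1K] : k <= K /\ k.+1 <= K by split; [exact: ltnW | exact: k_lt].
have pos : (u * P + k.*2).+2 < Q by have := z_lt _ k1K; rewrite doubleS !addnS.
apply: (@K23_path_small_minor _ _ eH_simple A B s s' c t).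
- by rewrite eq_sym.
- exact: change.
- by apply/allP; rewrite /= !clean // /P /unit_len -/K; lia.
- by move: t_new; rewrite !inE.
- apply/allP; rewrite /= !pole ?z_lt ?z_even ?odd_double ?clean //;
    rewrite /P /unit_len -/K; lia.
- have zw : gadj (z k) (w k).
    by rewrite /z /w addnS; apply/block_vertex_succ/ltnW.
  by case: (image_edge zw) => [[zw_eq | zw_adj] _]; [left | right].
have wz : gadj (w k) (z k.+1) by rewrite /z /w doubleS !addnS; apply: block_vertex_succ.
by case: (image_edge wz) => [[wz_eq | wz_adj] _]; [left | right].
Qed.

End Minor.

Unset Implicit Arguments.

Theorem corollary13 (l : nat) : 0 < l ->
  exists (VG : finType) (eG : rel VG),
    [/\ simple_graph eG, bipartite eG, planar eG &
      forall (VH : finType) (eH : rel VH), simple_graph eH ->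
      forall (n : nat) (f : VG -> (VH * 'I_n.+1) * 'I_l),
        injective f ->
        (forall x y, eG x y ->
           strong (strong eH (@pathg n.+1)) (@complete l) (f x) (f y)) ->
        small_minor 2 (@complete 4) eH /\ treewidth_ge 3 eH].
Proof.
move=> _; exists (gvertex l), (@gadj l); split.
- exact: gadj_simple.
- exact: gadj_bipartite.
- exact: gadj_planar.
move=> VH eH eH_simple n f f_inj f_hom.
have K4 := embedding_small_minor_K4 eH_simple f_inj f_hom.
by split; last exact: complete_minor_treewidth_ge K4.
Qed.
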